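(* Let $f$ be a $(b,1)$-coloring of the Hamming graph $H(n,q)$. Then $b$ is divisible by $q-1$. Moreover, if $q=p^s$ for a prime $p$ and $s\ge1$, then $b+1=q^r$ for some positive integer $r$.
   Context: The Hamming graph $H(n,q)$ has vertex set $\mathbb{Z}_q^n$, two vertices adjacent iff they differ in exactly one coordinate. A perfect $2$-coloring is a surjective map $f$ from the vertices onto $\{1,2\}$ such that each vertex of color $i$ has exactly $s_{i,j}$ neighbours of color $j$ (constants depending only on $i,j$). A $(b,c)$-coloring of $H(n,q)$ is a perfect $2$-coloring with quotient matrix $\begin{pmatrix} n(q-1)-b & b\\ c & n(q-1)-c\end{pmatrix}$, i.e. every vertex of color 1 has exactly $b$ neighbours of color 2 and every vertex of color 2 has exactly $c$ neighbours of color 1. *)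

From mathcomp Require Import all_boot.
Set Implicit Arguments. Unset Strict Implicit. Unset Printing Implicit Defensive.

(* Vertices of the Hamming graph H(n,q): words of length n over an alphabet
   of size q (we use 'I_q as Z_q; only equality of symbols matters). *)
Definition hvert (n q : nat) : finType := {ffun 'I_n -> 'I_q}.

Definition hadj (n q : nat) (x y : hvert n q) : bool :=
  #|[set i : 'I_n | x i != y i]| == 1.

(* A (b,c)-coloring: a surjective 2-coloring (color 1 = true, color 2 = false)
   such that every vertex of color 1 has exactly b neighbours of color 2 and
   every vertex of color 2 has exactly c neighbours of color 1.  (The diagonal
   entries n(q-1)-b, n(q-1)-c of the quotient matrix then hold automatically,
   since H(n,q) is n(q-1)-regular.) *)
Definition bc_coloring (n q : nat) (f : hvert n q -> bool) (b c : nat) : Prop :=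
  [/\ (exists x, f x), (exists x, ~~ f x),
      (forall x, f x -> #|[set y | hadj x y & ~~ f y]| = b) &
      (forall x, ~~ f x -> #|[set y | hadj x y & f y]| = c)].

From mathcomp Require Import all_boot.
Set Implicit Arguments. Unset Strict Implicit. Unset Printing Implicit Defensive.

(* If a vertex z of colour 2 lies on a line (the q words that agree with z
   outside one coordinate) containing two vertices of colour 1, z has two
   neighbours of colour 1; so a line through a vertex of colour 1 that
   contains a second one is monochromatic.  Hence the b neighbours of colour 2
   of a vertex of colour 1 fill whole lines, q - 1 at a time.  Double counting
   the edges between the colour classes gives |C2| = b |C1|, i.e.
   |C1| (b + 1) = q^n.  For q = p^s this makes b + 1 a power p^m, and
   p^m = 1 mod p^s - 1 forces s | m. *)

Lemma sum_card_rel_sym (T : finType) (r : rel T) (A B : pred T) :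
  symmetric r ->
  \sum_(x | A x) #|[set y | r x y & B y]| = \sum_(y | B y) #|[set x | r y x & A x]|.
Proof.
move=> r_sym.
have sum_indicator (C D : pred T) :
    \sum_(x | C x) #|[set y | r x y & D y]| = \sum_x \sum_y (C x && r x y && D y : nat).
  rewrite big_mkcond; apply: eq_bigr => x _.
  case: (C x) => /=; last by rewrite big1.
  by rewrite -sum1_card big_mkcond; apply: eq_bigr => y _; rewrite inE; case: (_ && _).
rewrite !sum_indicator exchange_big; apply: eq_bigr => y _; apply: eq_bigr => x _.
by rewrite r_sym; congr nat_of_bool; rewrite andbC andbA [RHS]andbAC.
Qed.

Lemma expn_eq1_mod_dvdn p s m :
  1 < p -> 0 < s -> p ^ m = 1 %[mod p ^ s - 1] -> s %| m.
Proof.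
move=> p_gt1 s_gt0 pm1.
have ps1 : p ^ s = 1 %[mod p ^ s - 1].
  by rewrite -{1}(@subnK 1 (p ^ s)) ?expn_gt0 ?(ltnW p_gt1) // modnDl.
have pv1 : p ^ (m %% s) = 1 %[mod p ^ s - 1].
  by rewrite -pm1 {2}(divn_eq m s) expnD (mulnC (m %/ s)) expnM -modnMml -(modnXm (m %/ s))
    ps1 modnXm exp1n modnMml mul1n.
have pv_gt0 : 0 < p ^ (m %% s) by rewrite expn_gt0 (ltnW p_gt1).
have : p ^ s - 1 %| p ^ (m %% s) - 1 by rewrite -eqn_mod_dvd // pv1.
have lt_pv : p ^ (m %% s) - 1 < p ^ s - 1.
  by rewrite ltn_sub2rE // ltn_exp2l ?ltn_pmod.
case: (posnP (p ^ (m %% s) - 1)) => [pv0 _ | pos]; last by rewrite gtnNdvd.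
have : p ^ (m %% s) <= p ^ 0 by rewrite expn0 -subn_eq0 pv0.
by rewrite leq_exp2l // leqn0.
Qed.

Section HammingGraph.
Variables n q : nat.
Implicit Types (x y : hvert n q) (i : 'I_n) (a : 'I_q).

Definition hupd x i a : hvert n q := [ffun j => if j == i then a else x j].

Lemma hupd_id x i : hupd x i (x i) = x.
Proof. by apply/ffunP => j; rewrite ffunE; case: eqP => // ->. Qed.

Lemma hupd_inj x i j a a' :
  a != x i -> hupd x i a = hupd x j a' -> i = j /\ a = a'.
Proof.
move=> a_new /ffunP /(_ i); rewrite !ffunE eqxx.
by case: (i =P j) => [<- //| _ eq_a]; rewrite eq_a eqxx in a_new.
Qed.

Lemma hadjC : symmetric (@hadj n q).
Proof.
by move=> x y; rewrite /hadj; congr (_ == 1); apply: eq_card => j; rewrite !inE eq_sym.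
Qed.

Lemma hadj_hupd x i a a' : a != a' -> hadj (hupd x i a) (hupd x i a').
Proof.
move=> neq_a; rewrite /hadj -(cards1 i); apply/eqP/eq_card => j.
by rewrite !inE !ffunE; case: (j == i); rewrite ?neq_a ?eqxx.
Qed.

Lemma hadjP x y : hadj x y -> exists2 i, y i != x i & y = hupd x i (y i).
Proof.
move=> /cards1P [i diff_i]; have : i \in [set i] by rewrite set11.
rewrite -diff_i inE eq_sym => yi_new; exists i => //.
apply/ffunP => j; rewrite ffunE; case: eqP => [-> //| /eqP ne_ji].
have : j \notin [set i] by rewrite inE.
by rewrite -diff_i inE negbK => /eqP.
Qed.

Lemma card_hadj x (P : pred (hvert n q)) :
  #|[set y | hadj x y & P y]| = \sum_i #|[set a | (a != x i) && P (hupd x i a)]|.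
Proof.
have -> : [set y | hadj x y & P y] =
    [set hupd x ia.1 ia.2 | ia in [set ia | (ia.2 != x ia.1) && P (hupd x ia.1 ia.2)]].
  apply/setP => y; rewrite inE; apply/andP/imsetP.
    by case=> /hadjP [i yi_new ->] Py; exists (i, y i); rewrite // inE yi_new.
  case=> [[i a]]; rewrite inE /= => /andP [a_new Py] ->; split => //.
  by rewrite -{1}(hupd_id x i) hadj_hupd // eq_sym.
rewrite card_in_imset; last first.
  by move=> [i a] [j a'] /[!inE] /andP[/= a_new _] _ /(hupd_inj a_new) [-> ->].
rewrite -sum1_card; under [RHS]eq_bigr => i _ do rewrite -sum1_card.
by rewrite pair_big_dep; apply: eq_bigl => ia; rewrite !inE.
Qed.

End HammingGraph.

Section UniqueNeighbour.
Variables (n q : nat) (f : hvert n q -> bool).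
Hypothesis colour1_nbr_le1 :
  forall z, ~~ f z -> #|[set y | hadj z y & f y]| <= 1.

Lemma line_colour1 x i a a' :
  f x -> a != x i -> f (hupd x i a) -> f (hupd x i a').
Proof.
move=> fx a_new fa; apply/negPn/negP => nfa'.
have a'_new : a' != x i by apply: contra nfa' => /eqP ->; rewrite hupd_id fx.
have neq_a' : a' != a by apply: contra nfa' => /eqP ->; rewrite fa.
have neq_x : x != hupd x i a.
  by apply: contra a_new => /eqP /ffunP /(_ i); rewrite ffunE eqxx => ->.
have two_nbrs : [set x; hupd x i a] \subset [set y | hadj (hupd x i a') y & f y].
  apply/subsetP => y; rewrite !inE => /orP [] /eqP ->; rewrite ?fx ?fa ?andbT.
    by rewrite -{2}(hupd_id x i) hadj_hupd.
  exact: hadj_hupd.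
by have := leq_trans (subset_leq_card two_nbrs) (colour1_nbr_le1 nfa'); rewrite cards2 neq_x.
Qed.

Lemma dvdn_card_colour2_nbrs x :
  f x -> q.-1 %| #|[set y | hadj x y & ~~ f y]|.
Proof.
move=> fx; rewrite card_hadj; apply: dvdn_sum => i _.
have [[a /andP [a_new fa]] | no_colour1] :=
  altP (@existsP _ (fun a => (a != x i) && f (hupd x i a))).
  suff -> : [set a' | (a' != x i) && ~~ f (hupd x i a')] = set0 by rewrite cards0.
  by apply/setP => a'; rewrite !inE (line_colour1 _ fx a_new fa) andbF.
suff -> : [set a | (a != x i) && ~~ f (hupd x i a)] = [set~ x i]
  by rewrite cardsC1 card_ord.
apply/setP => a; rewrite !inE; move: no_colour1; rewrite negb_exists => /forallP/(_ a).
by rewrite negb_and negbK; case: eqP.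
Qed.

End UniqueNeighbour.

Lemma bc_coloring_card n q (f : hvert n q -> bool) b c :
  bc_coloring f b c -> #|[set x | f x]| * b = #|[set x | ~~ f x]| * c.
Proof.
case=> _ _ card_b card_c.
rewrite -!sum_nat_const.
transitivity (\sum_(x | f x) #|[set y | hadj x y & ~~ f y]|).
  by apply: eq_big => [x | x /[!inE] /card_b ->]; rewrite ?inE.
rewrite (sum_card_rel_sym _ _ (@hadjC n q)).
by apply: eq_big => [x | x /card_c ->]; rewrite ?inE.
Qed.

Section OneColour2Neighbour.
Variables (n q : nat) (f : hvert n q -> bool) (b : nat).
Hypothesis col : bc_coloring f b 1.

Lemma bc1_coloring_card : #|[set x | f x]| * b.+1 = q ^ n.
Proof.
rewrite mulnS (bc_coloring_card col) muln1 -cardsUI.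
have -> : [set x | ~~ f x] = ~: [set x | f x] by apply/setP => x; rewrite !inE.
by rewrite setICr cards0 addn0 setUCr cardsT card_ffun !card_ord.
Qed.

Lemma bc1_coloring_gt0 : 0 < b.
Proof.
have [_ [y nfy] _ _] := col.
have : 0 < #|[set x | ~~ f x]| by apply/card_gt0P; exists y; rewrite inE.
by rewrite -(muln1 #|_|) -(bc_coloring_card col) muln_gt0 => /andP [].
Qed.

Lemma bc1_coloring_dvdn : q.-1 %| b.
Proof.
have [[x fx] _ card_b card_1] := col.
by rewrite -(card_b x fx); apply: dvdn_card_colour2_nbrs fx => z /card_1 ->.
Qed.

End OneColour2Neighbour.

Theorem proposition4 (n q : nat) (f : hvert n q -> bool) (b : nat) :
  bc_coloring f b 1 ->
  (q - 1 %| b) /\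
  (forall p s : nat, prime p -> 0 < s -> q = p ^ s ->
     exists r : nat, 0 < r /\ b + 1 = q ^ r).
Proof.
move=> col; have dvd_b := bc1_coloring_dvdn col.
split=> [|p s p_pr s_gt0 q_eq]; first by rewrite subn1.
have [m _ b1_eq] : exists2 m, m <= s * n & b + 1 = p ^ m.
  by apply/dvdn_pfactor; rewrite // expnM -q_eq -(bc1_coloring_card col) addn1 dvdn_mull.
have [r m_eq] : exists r, m = r * s.
  apply/dvdnP/(expn_eq1_mod_dvdn (prime_gt1 p_pr) s_gt0).
  by rewrite -b1_eq -q_eq subn1 -modnDml (eqP dvd_b).
exists r; split; last by rewrite b1_eq q_eq -expnM mulnC m_eq.
rewrite lt0n; apply: contraTneq (bc1_coloring_gt0 col) => r0.
by move: b1_eq; rewrite m_eq r0 addn1 => -[->].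
Qed.
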